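(* Let $V$ be a set of program variables and let $F$ be a downward closed hyper-assertion (i.e. $S\in F$ and $S'\subseteq S$ imply $S'\in F$) such that for all sets of extended states $S,S'$ with $S\approx_V S'$ we have $S\in F\iff S'\in F$. Then there exists $F_{\max}\subseteq F$ such that $F=\bigcup_{f\in F_{\max}}\mathcal{P}(f)$ and every $f\in F_{\max}$ satisfies: for all $\Lambda,s,s',h,\epsilon$ with $s(x)=s'(x)$ for all $x\notin V$, $\langle\Lambda,\langle s,h\rangle_\epsilon\rangle\in f\iff\langle\Lambda,\langle s',h\rangle_\epsilon\rangle\in f$.
   Context: An extended state is $\langle\Lambda,\langle s,h\rangle_\epsilon\rangle$ with logical store $\Lambda:\mathrm{LVars}\to\mathbb{N}$, program store $s:\mathrm{PVars}\to\mathbb{N}$ (total), heap $h$ a finite partial function from $\mathbb{N}$ to $\mathbb{N}\cup\{\bot\}$, and label $\epsilon\in\{\mathrm{ok},\mathrm{er},\mathrm{uk}\}$. A hyper-assertion is a set of sets of extended states; $\mathcal{P}(f)$ denotes the powerset of $f$. For sets of extended states, $S\precsim_V S'$ means: for every $\langle\Lambda,\langle s,h\rangle_\epsilon\rangle\in S$ there is $s'$ with $s'(x)=s(x)$ for all $x\notin V$ and $\langle\Lambda,\langle s',h\rangle_\epsilon\rangle\in S'$; and $S\approx_V S'$ means $S\precsim_V S'$ and $S'\precsim_V S$. *)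

From Stdlib Require Import Arith List.

Inductive label := ok | er | uk.

(* A heap: finite partial function from nat to (nat ∪ {⊥}).
   [None] = undefined, [Some None] = ⊥, [Some (Some n)] = n. *)
Definition heap_fun := nat -> option (option nat).
Definition finite_dom (h : heap_fun) : Prop :=
  exists l : list nat, forall a, h a <> None -> In a l.
Definition heap := { h : heap_fun | finite_dom h }.

Record ext_state (LVar PVar : Type) := mkES {
  es_lstore : LVar -> nat;
  es_pstore : PVar -> nat;
  es_heap   : heap;
  es_label  : label }.
Arguments mkES {LVar PVar}.

Definition state_set (LVar PVar : Type) := ext_state LVar PVar -> Prop.
Definition hyper_assertion (LVar PVar : Type) := state_set LVar PVar -> Prop.

Definition precsim {LVar PVar} (V : PVar -> Prop) (S S' : state_set LVar PVar) : Prop :=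
  forall Lam s h e, S (mkES Lam s h e) ->
    exists s', (forall x, ~ V x -> s' x = s x) /\ S' (mkES Lam s' h e).

Definition approx {LVar PVar} (V : PVar -> Prop) (S S' : state_set LVar PVar) : Prop :=
  precsim V S S' /\ precsim V S' S.

Definition subset {LVar PVar} (S S' : state_set LVar PVar) : Prop :=
  forall st, S st -> S' st.

Definition downward_closed {LVar PVar} (F : hyper_assertion LVar PVar) : Prop :=
  forall S S', F S -> subset S' S -> F S'.

(* Take F_max to be the members of F that are invariant under changing the
   variables of V.  Every S in F is contained in its V-saturation (close S
   under such changes), which is ≈_V-equivalent to S, hence lies in F, and is
   V-invariant; downward closure gives the converse inclusion. *)


Section Saturation.

Variables (LVar PVar : Type) (V : PVar -> Prop).

Definition agree_off (s s' : PVar -> nat) : Prop := forall x, ~ V x -> s x = s' x.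

Lemma agree_off_sym {s s' : PVar -> nat} : agree_off s s' -> agree_off s' s.
Proof. intros H x Hx. symmetry. apply H, Hx. Qed.

Lemma agree_off_trans {s1 s2 s3 : PVar -> nat} :
  agree_off s1 s2 -> agree_off s2 s3 -> agree_off s1 s3.
Proof. intros H12 H23 x Hx. rewrite H12 by exact Hx. apply H23, Hx. Qed.

Definition V_invariant (f : state_set LVar PVar) : Prop :=
  forall Lam s s' h e, agree_off s s' -> (f (mkES Lam s h e) <-> f (mkES Lam s' h e)).

Definition saturate (S : state_set LVar PVar) : state_set LVar PVar :=
  fun st => exists s0,
    S (mkES (es_lstore _ _ st) s0 (es_heap _ _ st) (es_label _ _ st)) /\
    agree_off s0 (es_pstore _ _ st).

Lemma subset_saturate (S : state_set LVar PVar) : subset S (saturate S).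
Proof. intros [Lam s h e] H. exists s. split; [exact H | intros x _; reflexivity]. Qed.

Lemma precsim_subset (S S' : state_set LVar PVar) : subset S S' -> precsim V S S'.
Proof. intros Hsub Lam s h e H. exists s. split; [reflexivity | apply Hsub, H]. Qed.

Lemma precsim_saturate (S : state_set LVar PVar) : precsim V (saturate S) S.
Proof. intros Lam s h e [s0 [H Hs0]]. exists s0. split; [exact Hs0 | exact H]. Qed.

Lemma approx_saturate (S : state_set LVar PVar) : approx V S (saturate S).
Proof. split; [apply precsim_subset, subset_saturate | apply precsim_saturate]. Qed.

Lemma saturate_V_invariant (S : state_set LVar PVar) : V_invariant (saturate S).
Proof.
  intros Lam s s' h e Hss.
  split; intros [s0 [H Hs0]]; exists s0; split; try exact H.
  - exact (agree_off_trans Hs0 Hss).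
  - exact (agree_off_trans Hs0 (agree_off_sym Hss)).
Qed.

End Saturation.

Arguments V_invariant {LVar PVar} V f.
Arguments saturate {LVar PVar} V S _.

Theorem lemmaB1 (LVar PVar : Type) (V : PVar -> Prop)
    (F : hyper_assertion LVar PVar) :
  downward_closed F ->
  (forall S S' : state_set LVar PVar, approx V S S' -> (F S <-> F S')) ->
  exists Fmax : hyper_assertion LVar PVar,
    (forall f, Fmax f -> F f) /\
    (forall S, F S <-> exists f, Fmax f /\ subset S f) /\
    (forall f, Fmax f ->
       forall (Lam : LVar -> nat) (s s' : PVar -> nat) (h : heap) (e : label),
         (forall x, ~ V x -> s x = s' x) ->
         (f (mkES Lam s h e) <-> f (mkES Lam s' h e))).
Proof.
  intros Hdown Happrox.
  exists (fun f => F f /\ V_invariant V f).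
  split; [intros f [Hf _]; exact Hf |].
  split; [| intros f [_ Hinv]; exact Hinv].
  intros S; split.
  - intros HS. exists (saturate V S). split; [split |].
    + apply (Happrox S); [apply approx_saturate | exact HS].
    + apply saturate_V_invariant.
    + apply subset_saturate.
  - intros [f [[Hf _] Hsub]]. exact (Hdown f S Hf Hsub).
Qed.
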